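(* Let $\mathbb{F}_q$ be a finite field of characteristic $p$, let $r,v,k,t$ be positive integers, and let $f(x):=x^r h_k(x^v)^t$ where $h_k(x):=x^{k-1}+x^{k-2}+\dots+1$. Let $s:=\gcd(v,q-1)$ and $d:=(q-1)/s$. If $d=1$ then $f$ permutes $\mathbb{F}_q$ if and only if $\gcd(k,p)=\gcd(r,s)=1$. If $d=2$ then $f$ permutes $\mathbb{F}_q$ if and only if $\gcd(k,2p)=\gcd(r,s)=1$ and $k^{st}\equiv (-1)^{r+1}\pmod{p}$.
   Context: A polynomial permutes $\mathbb{F}_q$ if the induced map $\mathbb{F}_q\to\mathbb{F}_q$ is a bijection. *)

From HB Require Import structures.
From mathcomp Require Import all_boot all_order all_algebra all_field.
Set Implicit Arguments. Unset Strict Implicit. Unset Printing Implicit Defensive.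
Import GRing.Theory.
Local Open Scope ring_scope.

Definition hk (R : nzRingType) (k : nat) : {poly R} := \sum_(i < k) 'X^i.

Definition fpoly (R : comNzRingType) (r v k t : nat) : {poly R} :=
  'X^r * (hk R k \Po 'X^v) ^+ t.

Definition permutes (F : finFieldType) (f : {poly F}) : Prop :=
  bijective (fun x : F => f.[x]).

(* For x <> 0, x^v = (x^s)^(v/s), so f(x) = x^r G(x^s) with
   G(z) = h_k(z^(v/s))^t, and x^s ranges over the group of d-th roots of unity.
   Such a map permutes F_q iff gcd(r, s) = 1, G does not vanish on the d-th roots of
   unity and z |-> z^r G(z)^s is injective on them: if f(x) = f(y), taking s-th powers
   gives x^s = y^s, hence x^r = y^r and x = y; conversely, if z^r G(z)^s takes equal
   values at x^s and y^s then f(x)/f(y) is an s-th root of unity, hence the r-th power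
   of an s-th root of unity u; then f(ux) = f(y), so y = ux and y^s = x^s.
   For d = 1 the only condition left is G(1) = k^t <> 0. For d = 2, v/s is odd, so
   G(-1) = (k mod 2)^t, and injectivity on {1, -1} reads k^(st) <> (-1)^r, which is
   k^(st) = (-1)^(r+1) because k^(2st) = k^((q-1)t) = 1. *)

From HB Require Import structures.
From mathcomp Require Import all_boot all_order all_algebra all_field.
From mathcomp Require Import cyclic.

Set Implicit Arguments. Unset Strict Implicit. Unset Printing Implicit Defensive.
Import GRing.Theory.
Local Open Scope ring_scope.

Lemma coprime_Bezout_nat (r s : nat) : (0 < r)%N -> coprime r s ->
  exists a b, (1 + a * s = b * r)%N.
Proof.
move=> r_gt0 cop; have [a _ dvd_r] := Bezoutl s r_gt0.
rewrite (eqP cop) in dvd_r.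
by exists a, ((1 + a * s) %/ r)%N; rewrite divnK.
Qed.

Lemma odd_div_gcdn (v n : nat) : (n %/ gcdn v n = 2)%N -> odd (v %/ gcdn v n).
Proof.
set s := gcdn v n => n_s; have s_gt0 : (0 < s)%N by case: s n_s => // ; rewrite divn0.
have : gcdn (v %/ s * s) (2 * s) = (1 * s)%N.
  by rewrite divnK ?dvdn_gcdl // -n_s divnK ?dvdn_gcdr // mul1n.
rewrite -muln_gcdl => /eqP; rewrite eqn_pmul2r // => /eqP gcd1.
by rewrite -coprimen2 /coprime gcd1.
Qed.

Lemma coprime_pcharf (R : nzRingType) (p k : nat) : p \in [pchar R] ->
  coprime k p = (k%:R != 0 :> R).
Proof.
by move=> pchar_p; rewrite coprime_sym prime_coprime ?(pcharf_prime pchar_p) ?(dvdn_pcharf pchar_p).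
Qed.

Lemma eqz_mod_pcharf (R : nzRingType) (p : nat) (a b : int) : p \in [pchar R] ->
  (a = b %[mod p])%Z <-> a%:~R = b%:~R :> R.
Proof.
move=> pchar_p; apply: (iff_trans (rwP eqP)); apply: (iff_trans _ (iff_sym (rwP eqP))).
by rewrite eqz_mod_dvd (dvdz_pcharf pchar_p) rmorphB /= subr_eq0.
Qed.

Lemma expr_coprime_eq1 (R : pzRingType) (r s : nat) (z : R) :
  coprime r s -> z ^+ r = 1 -> z ^+ s = 1 -> z = 1.
Proof.
case: r => [|r] cop z_r z_s.
  by move: cop; rewrite /coprime gcd0n => /eqP s1; rewrite -z_s s1.
have [a [b e]] := coprime_Bezout_nat (ltn0Sn r) cop.
have -> : z = z ^+ (1 + a * s) by rewrite exprD mulnC exprM z_s expr1n mulr1 expr1.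
by rewrite e mulnC exprM z_r expr1n.
Qed.

Lemma expr_coprime_onto (R : pzRingType) (r s : nat) (z : R) :
  (0 < r)%N -> coprime r s -> z ^+ s = 1 -> exists2 x, x ^+ s = 1 & x ^+ r = z.
Proof.
move=> r_gt0 cop z_s; have [a [b e]] := coprime_Bezout_nat r_gt0 cop.
exists (z ^+ b); first by rewrite -exprM mulnC exprM z_s expr1n.
by rewrite -exprM -e exprD mulnC exprM z_s expr1n mulr1 expr1.
Qed.

Lemma expf_coprime_inj (F : fieldType) (r s : nat) (x y : F) : coprime r s ->
  y != 0 -> x ^+ r = y ^+ r -> x ^+ s = y ^+ s -> x = y.
Proof.
move=> cop y_neq0 x_r x_s.
have : x / y = 1.
  by apply: (expr_coprime_eq1 cop); rewrite expr_div_n ?x_r ?x_s divff ?expf_neq0.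
by move/(canRL (divfK y_neq0)); rewrite mul1r.
Qed.

Lemma unity_root1_forall (R : nzRingType) (P : R -> Prop) :
  {in 1.-unity_root, forall z, P z} <-> P 1.
Proof.
split=> [allP | P1 z /unity_rootP]; last by rewrite expr1 => ->.
by apply/allP/unity_rootP; rewrite expr1n.
Qed.

Lemma unity_root1_inj (R : nzRingType) (T : Type) (g : R -> T) :
  {in 1.-unity_root &, injective g}.
Proof. by move=> z1 z2 /unity_rootP; rewrite expr1 => -> /unity_rootP; rewrite expr1 => ->. Qed.

Lemma unity_root2_forall (F : fieldType) (P : F -> Prop) :
  {in 2.-unity_root, forall z, P z} <-> P 1 /\ P (-1).
Proof.
split=> [allP | [P1 PN1] z /unity_rootP/eqP]; last by rewrite sqrf_eq1 => /orP[] /eqP ->.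
by split; apply/allP/unity_rootP; rewrite ?sqrrN expr1n.
Qed.

Lemma unity_root2_inj (F : fieldType) (T : Type) (g : F -> T) : (-1 : F) != 1 ->
  {in 2.-unity_root &, injective g} <-> g 1 <> g (-1).
Proof.
have root1 : (1 : F) \in 2.-unity_root by apply/unity_rootP; rewrite expr1n.
have rootN1 : (-1 : F) \in 2.-unity_root by apply/unity_rootP; rewrite sqrrN expr1n.
move=> N1_neq1; split=> [g_inj /(g_inj _ _ root1 rootN1) eq1N1 | gN1 z1 z2].
  by move: N1_neq1; rewrite -eq1N1 eqxx.
move=> /unity_rootP/eqP + /unity_rootP/eqP; rewrite !sqrf_eq1.
by case/orP=> /eqP -> /orP[] /eqP -> // eq_g; exfalso; apply: gN1; rewrite eq_g.
Qed.

Lemma sqrf_eq1_neq (F : fieldType) (x e : F) : (-1 : F) != 1 ->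
  x ^+ 2 = 1 -> e ^+ 2 = 1 -> (x != e) = (x == - e).
Proof.
move=> N1_neq1 /eqP + /eqP; rewrite !sqrf_eq1 => /orP[] /eqP -> /orP[] /eqP ->;
  by rewrite ?opprK eqxx ?(eq_sym 1) ?(negbTE N1_neq1).
Qed.

Lemma horner_hk (R : nzRingType) (k : nat) (x : R) :
  (hk R k).[x] = \sum_(i < k) x ^+ i.
Proof. by rewrite /hk horner_sum; apply: eq_bigr => i _; rewrite hornerXn. Qed.

Lemma horner_hk1 (R : nzRingType) (k : nat) : (hk R k).[1] = k%:R.
Proof.
by rewrite horner_hk (eq_bigr (fun=> 1)) ?sumr_const ?card_ord // => i _; rewrite expr1n.
Qed.

Lemma horner_hkN1 (R : nzRingType) (k : nat) : (hk R k).[-1] = (odd k)%:R.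
Proof.
rewrite horner_hk; elim: k => [|k IHk]; first by rewrite big_ord0.
rewrite big_ord_recr /= IHk -signr_odd.
by case: (odd k); rewrite /= ?expr0 ?expr1 ?addrN ?add0r.
Qed.

Lemma horner_fpoly (R : comNzRingType) (r v k t : nat) (x : R) :
  (fpoly R r v k t).[x] = x ^+ r * (hk R k).[x ^+ v] ^+ t.
Proof. by rewrite /fpoly hornerM hornerXn horner_exp horner_comp hornerXn. Qed.

Section FinFieldPowers.

Variable F : finFieldType.
Local Notation n := #|F|.-1.

Lemma expf_card_pred (x : F) : x != 0 -> x ^+ n = 1.
Proof.
move=> x_neq0; apply: (mulfI x_neq0).
by rewrite mulr1 -exprS (ltn_predK (finNzRing_gt1 F)) expf_card.
Qed.

Lemma finField_prim_root : exists w : F, n.-primitive_root w.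
Proof.
have /hasP[w _ w_prim] : has n.-primitive_root (enum [pred x : F | x != 0]).
  apply: has_prim_root; last by rewrite -cardE cardC1.
  - by have := finNzRing_gt1 F; case: #|F| => [|[|]].
  - by apply/allP => x; rewrite mem_enum inE => x_neq0; rewrite unity_rootE expf_card_pred.
  - exact: enum_uniq.
by exists w.
Qed.

Variable s : nat.
Hypothesis s_dvd : (s %| n)%N.
Local Notation d := (n %/ s)%N.

Let n_gt0 : (0 < n)%N. Proof. by rewrite -ltnS (ltn_predK (finNzRing_gt1 F)) finNzRing_gt1. Qed.

Let s_gt0 : (0 < s)%N.
Proof. by move: s_dvd; case: (s) => //; rewrite dvd0n => /eqP n0; move: n_gt0; rewrite n0. Qed.

Lemma expf_unity_root (x : F) : x != 0 -> x ^+ s \in d.-unity_root.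
Proof. by move=> x_neq0; apply/unity_rootP; rewrite -exprM mulnC divnK ?expf_card_pred. Qed.

Lemma unity_root_expf_onto (z : F) :
  z \in d.-unity_root -> exists2 x, x != 0 & x ^+ s = z.
Proof.
move=> /unity_rootP z_d; have [w w_prim] := finField_prim_root.
have d_gt0 : (0 < d)%N by rewrite (divn_gt0 _ s_gt0) (dvdn_leq n_gt0 s_dvd).
have [i z_w] : {i : 'I_n | z = w ^+ i}.
  by apply: (prim_rootP w_prim); rewrite -(divnK s_dvd) exprM z_d expr1n.
have s_i : (s %| i)%N.
  by rewrite -(dvdn_pmul2r d_gt0) mulnC divnK // (prim_order_dvd w_prim) exprM -z_w z_d.
exists (w ^+ (i %/ s)); last by rewrite -exprM divnK.
rewrite expf_neq0 //; apply: contra_eq_neq (prim_expr_order w_prim) => ->.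
by rewrite expr0n gtn_eqF // eq_sym oner_neq0.
Qed.

Lemma exists_unity_root_neq1 (r : nat) : ~~ coprime r s ->
  exists y : F, [/\ y != 1, y ^+ r = 1 & y ^+ s = 1].
Proof.
move=> ncop; have [w w_prim] := finField_prim_root; set g := gcdn r s.
have g_n : (g %| n)%N := dvdn_trans (dvdn_gcdr r s) s_dvd.
have g_gt1 : (1 < g)%N by rewrite ltn_neqAle eq_sym ncop gcdn_gt0 s_gt0 orbT.
pose y := w ^+ (n %/ g).
have y_g : y ^+ g = 1 by rewrite -exprM divnK ?prim_expr_order.
have y_dvd m : (g %| m)%N -> y ^+ m = 1.
  by move=> /dvdnP[c ->]; rewrite mulnC exprM y_g expr1n.
exists y; split; [|exact: y_dvd (dvdn_gcdl r s)|exact: y_dvd (dvdn_gcdr r s)].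
have n_g_gt0 : (0 < n %/ g)%N.
  by rewrite (divn_gt0 _ (ltnW g_gt1)) (dvdn_leq n_gt0 g_n).
rewrite -(prim_order_dvd w_prim); apply/negP => /(dvdn_leq n_g_gt0).
by rewrite leqNgt (ltn_Pdiv g_gt1 n_gt0).
Qed.

Section PowerTimesFunctionOfPower.

Variables (r : nat) (G : F -> F).
Hypothesis r_gt0 : (0 < r)%N.
Local Notation f := (fun x => x ^+ r * G (x ^+ s)).
Local Notation g := (fun z => z ^+ r * G z ^+ s).

Let f0 : f 0 = 0. Proof. by rewrite /= expr0n gtn_eqF // mul0r. Qed.

Let g_expr x : g (x ^+ s) = f x ^+ s. Proof. by rewrite /= exprMn exprAC. Qed.

Lemma bij_expr_mul_coprime : bijective f -> coprime r s.
Proof.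
move=> /bij_inj f_inj; apply: contraT => /exists_unity_root_neq1[y [y_neq1 y_r y_s]].
by move: y_neq1; rewrite (f_inj y 1) ?eqxx //= y_r y_s !expr1n.
Qed.

Lemma bij_expr_mul_neq0 : bijective f -> {in d.-unity_root, forall z, G z != 0}.
Proof.
move=> /bij_inj f_inj _ /unity_root_expf_onto[x x_neq0 <-].
by apply: contra x_neq0 => /eqP Gx0; apply/eqP/f_inj; rewrite f0 /= Gx0 mulr0.
Qed.

Lemma bij_expr_mul_inj : bijective f -> {in d.-unity_root &, injective g}.
Proof.
move=> f_bij; have f_inj := bij_inj f_bij; have cop := bij_expr_mul_coprime f_bij.
have fx_neq0 x : x != 0 -> f x != 0.
  by move=> x_neq0; apply: contra x_neq0 => /eqP fx0; apply/eqP/f_inj; rewrite fx0 f0.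
move=> _ _ /unity_root_expf_onto[x1 x1_neq0 <-] /unity_root_expf_onto[x2 x2_neq0 <-].
rewrite !g_expr => f_s.
have c_s : (f x1 / f x2) ^+ s = 1 by rewrite expr_div_n f_s divff ?expf_neq0 ?fx_neq0.
have [u u_s u_r] := expr_coprime_onto r_gt0 cop c_s.
have -> : x1 = u * x2.
  by apply: f_inj; rewrite /= !exprMn u_s mul1r -mulrA u_r divfK ?fx_neq0.
by rewrite exprMn u_s mul1r.
Qed.

Lemma coprime_expr_mul_bij : coprime r s -> {in d.-unity_root, forall z, G z != 0} ->
  {in d.-unity_root &, injective g} -> bijective f.
Proof.
move=> cop G_neq0 g_inj.
have fx_neq0 x : x != 0 -> f x != 0.
  by move=> x_neq0; rewrite mulf_neq0 ?expf_neq0 ?G_neq0 ?expf_unity_root.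
apply: injF_bij => x y /= fxy.
have [x0 | x_neq0] := eqVneq x 0; have [y0 | y_neq0] := eqVneq y 0.
- by rewrite x0 y0.
- by move: (fx_neq0 y y_neq0); rewrite -fxy x0 f0 eqxx.
- by move: (fx_neq0 x x_neq0); rewrite fxy y0 f0 eqxx.
have xy_s : x ^+ s = y ^+ s by apply: g_inj; rewrite ?expf_unity_root // !g_expr fxy.
apply: (expf_coprime_inj cop y_neq0 _ xy_s).
by apply: (mulIf (G_neq0 _ (expf_unity_root y_neq0))); rewrite -[in LHS]xy_s fxy.
Qed.

Lemma bij_expr_mulP : bijective f <->
  [/\ coprime r s, {in d.-unity_root, forall z, G z != 0} &
      {in d.-unity_root &, injective g}].
Proof.
split=> [f_bij | [cop G_neq0 g_inj]]; last exact: coprime_expr_mul_bij.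
by split; [exact: bij_expr_mul_coprime | exact: bij_expr_mul_neq0 | exact: bij_expr_mul_inj].
Qed.

End PowerTimesFunctionOfPower.

End FinFieldPowers.

Lemma finField_N1_neq1 (F : finFieldType) : ~~ odd #|F|.-1 -> (-1 : F) != 1.
Proof.
move=> n_even; have ncop : ~~ coprime 2 #|F|.-1 by rewrite coprime_sym coprimen2.
have [y [y_neq1 y2 _]] := exists_unity_root_neq1 (dvdnn #|F|.-1) ncop.
by move/eqP: y2; rewrite sqrf_eq1 (negbTE y_neq1) => /eqP <-.
Qed.

Section PermutesFpoly.

Variables (F : finFieldType) (p r v k t : nat).
Hypotheses (pchar_p : p \in [pchar F]) (r_gt0 : (0 < r)%N) (t_gt0 : (0 < t)%N).
Local Notation n := #|F|.-1.
Local Notation s := (gcdn v n).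
Local Notation d := (n %/ s)%N.
Local Notation G := (fun z : F => (hk F k).[z ^+ (v %/ s)] ^+ t).
Local Notation g := (fun z : F => z ^+ r * G z ^+ s).

Let s_dvd : (s %| n)%N := dvdn_gcdr v n.

Lemma permutes_fpolyP : permutes (fpoly F r v k t) <->
  [/\ coprime r s, {in d.-unity_root, forall z, G z != 0} & {in d.-unity_root &, injective g}].
Proof.
apply: iff_trans (bij_expr_mulP s_dvd G r_gt0).
by split=> /eq_bij; apply=> x; rewrite /= horner_fpoly -exprM mulnC divnK ?dvdn_gcdl.
Qed.

Let G1 : G 1 = k%:R ^+ t. Proof. by rewrite /= expr1n horner_hk1. Qed.

Let G1_neq0 : (G 1 != 0) = coprime k p.
Proof. by rewrite /= G1 expf_eq0 t_gt0 (coprime_pcharf _ pchar_p). Qed.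

Lemma permutes_fpoly_d1 : d = 1%N ->
  permutes (fpoly F r v k t) <-> coprime k p /\ coprime r s.
Proof.
move=> dE; apply: (iff_trans permutes_fpolyP); rewrite dE.
split=> [[cop /unity_root1_forall] | [kp cop]]; first by rewrite /= G1_neq0.
by split=> //; [apply/unity_root1_forall; rewrite /= G1_neq0 | apply: unity_root1_inj].
Qed.

Section QuadraticCase.

Hypothesis dE : d = 2%N.

Let n2 : n = (2 * s)%N. Proof. by rewrite -[LHS](divnK s_dvd) dE mulnC. Qed.

Let N1_neq1 : (-1 : F) != 1. Proof. by apply: finField_N1_neq1; rewrite n2 oddM. Qed.

Let GN1 : G (-1) = (odd k)%:R ^+ t.
Proof. by rewrite /= -signr_odd (odd_div_gcdn dE) expr1 horner_hkN1. Qed.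

Let G_neq0 : {in 2.-unity_root, forall z, G z != 0} <-> odd k && coprime k p.
Proof.
apply: (iff_trans (unity_root2_forall _)); apply: (iff_trans (rwP andP)).
rewrite /= G1_neq0 GN1 expf_eq0 t_gt0 andbC.
by case: (odd k); rewrite ?eqxx ?oner_eq0.
Qed.

Let g_neq_congr (kp : coprime k p) (k_odd : odd k) : g 1 <> g (-1) <->
  ((Posz k) ^+ (s * t) = (-1) ^+ (r + 1) %[mod Posz p])%Z.
Proof.
have k_neq0 : k%:R != 0 :> F by rewrite -(coprime_pcharf _ pchar_p).
have kst_sqr : (k%:R ^+ (s * t) : F) ^+ 2 = 1.
  by rewrite -exprM mulnC mulnA -n2 exprM expf_card_pred ?expr1n.
have sign_sqr : ((-1) ^+ r : F) ^+ 2 = 1 by rewrite -exprM mulnC exprM sqrrN !expr1n.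
apply: iff_sym; apply: (iff_trans (eqz_mod_pcharf _ _ pchar_p)).
rewrite rmorphXn /= intr_sign addn1 exprS mulN1r.
rewrite G1 GN1 k_odd !expr1n mul1r mulr1 -exprM [(t * _)%N]mulnC.
have := sqrf_eq1_neq N1_neq1 kst_sqr sign_sqr.
by move=> neq_eq_opp; split=> /eqP; [rewrite -neq_eq_opp | rewrite neq_eq_opp] => /eqP.
Qed.

Lemma permutes_fpoly_d2 : permutes (fpoly F r v k t) <->
  [/\ coprime k (2 * p), coprime r s &
      ((Posz k) ^+ (s * t) = (-1) ^+ (r + 1) %[mod Posz p])%Z].
Proof.
apply: (iff_trans permutes_fpolyP); rewrite dE coprimeMr coprimen2.
split=> [[cop /G_neq0/andP[k_odd kp] /(unity_root2_inj _ N1_neq1)/(g_neq_congr kp k_odd) kst] |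
         [/andP[k_odd kp] cop /(g_neq_congr kp k_odd)/(unity_root2_inj _ N1_neq1) g_inj]].
  by rewrite k_odd kp.
by split=> //; apply/G_neq0; rewrite k_odd kp.
Qed.

End QuadraticCase.

End PermutesFpoly.

Theorem proposition3p1 (F : finFieldType) (p : nat) (r v k t : nat)
  (hp : p \in [pchar F]%R)
  (hr : (0 < r)%N) (hv : (0 < v)%N) (hk0 : (0 < k)%N) (ht : (0 < t)%N) :
  let q := #|F| in
  let s := gcdn v q.-1 in
  let d := (q.-1 %/ s)%N in
  (d = 1%N ->
     (permutes (fpoly F r v k t) <-> coprime k p /\ coprime r s)) /\
  (d = 2%N ->
     (permutes (fpoly F r v k t) <->
        [/\ coprime k (2 * p), coprime r s &
            ((Posz k) ^+ (s * t) = (-1) ^+ (r + 1) %[mod Posz p])%Z])).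
Proof.
move=> q s d.
by split; [exact: (permutes_fpoly_d1 k hp hr ht) | exact: (permutes_fpoly_d2 k hp hr ht)].
Qed.
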